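(* Let $f\in V\hat{A}$. Let $s_0\in\mathrm{Sing}(f)$, and let $O=\{f^i(s_0):i\in\mathbb Z\}$ be its orbit. Suppose $s_0$ is the only singularity of $f$ lying in $O$, and write $s_i=f^i(s_0)$. (a) If $O$ is infinite, then $\mathrm{Sing}(f^n)\cap O=\{s_{-n+1},\dots,s_{-1},s_0\}$ for every $n\ge1$. In particular, $f$ has infinite order and $|\mathrm{Sing}(f^n)|\ge n$ for all $n\ge1$. (b) If $O$ is finite of cardinality $m$, then $\mathrm{Sing}(f^n)\cap O=\{s_{-n+1},\dots,s_0\}$ for $1\le n\le m$. In particular, $s_0$ is a singularity of $f^m$ that is fixed by $f^m$.
   Context: Let $\mathfrak C=\{0,1\}^{\mathbb N}$ be the Cantor set, with points labelled by numbers in $[0,1]$ via binary expansion. A dyadic $p\in(0,1)$ corresponds to two points: $p^-$ (binary expansion eventually $1$) and $p^+$ (binary expansion eventually $0$). The Belk–Hyde–Matucci group $V\hat{A}$ is the group of bijections $f$ of $\mathfrak C$ such that: - $f$ (drawn as a map on $[0,1]$) is piecewise linear with slopes powers of $2$ and pieces beginning and ending at points with dyadic coordinates, where breakpoints may accumulate only at finitely many points, called the singularities of $f$; - each singularity has the form $p^\pm$ with $p$ dyadic, and its image has the form $q^\pm$ with the same sign; - on a sufficiently small one-sided neighborhood of a singularity $p^\pm$ with $f(p^\pm)=q^\pm$, $f$ is continuous and satisfies $f\circ L_p=L_q\circ f$, where $L_r(x)=2(x-r)+r$. $\mathrm{Sing}(f)$ denotes the finite set of singularities of $f$. Products are written as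 $fg=g\circ f$. *)

From Stdlib Require Import Arith List.
Import ListNotations.

(** The Cantor set {0,1}^N : a point is its binary expansion. *)
Definition cantor := nat -> bool.

Definition prepend (w : list bool) (z : cantor) : cantor :=
  fun i => if i <? length w then nth i w false else z (i - length w).

Definition const_seq (c : bool) : cantor := fun _ => c.

Definition agree (n : nat) (x y : cantor) : Prop := forall i, i < n -> y i = x i.

Definition in_cone (w : list bool) (x : cantor) : Prop :=
  forall i, i < length w -> x i = nth i w false.

Definition cont_at (f : cantor -> cantor) (x : cantor) : Prop :=
  forall n, exists m, forall y, agree m x y -> agree n (f x) (f y).

(** f is "locally linear" at x: on some cone neighbourhood [x_0..x_{n-1}] of x,
    f is a prefix replacement  (x_0..x_{n-1}) . z  |->  v . z,
    i.e. a single linear piece with slope a power of 2 and dyadic endpoints. *)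
Definition loc_linear (f : cantor -> cantor) (x : cantor) : Prop :=
  exists (n : nat) (v : list bool),
    forall y, agree n x y -> f y = prepend v (fun i => y (i + n)).

(** Sing(f): the points at which breakpoints of f accumulate, i.e. at which
    f is not locally a single dyadic linear piece. *)
Definition Sing (f : cantor -> cantor) (x : cantor) : Prop := ~ loc_linear f x.

(** Condition at a singularity s: s = w . c^oo (i.e. s = p^+ if c = false,
    p^- if c = true, p dyadic), f(s) = v . c^oo (same sign), f is continuous
    on the one-sided neighbourhood [w] of s, and on the neighbourhood [w c]
    of s one has f o L_p = L_q o f, where L_p (w c z) = w z and
    L_q (v c z') = v z'. *)
Definition sing_ok (f : cantor -> cantor) (s : cantor) : Prop :=
  exists (w v : list bool) (c : bool),
    s = prepend w (const_seq c) /\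
    f s = prepend v (const_seq c) /\
    (forall x, in_cone w x -> cont_at f x) /\
    (forall z, exists z',
        f (prepend (w ++ [c]) z) = prepend (v ++ [c]) z' /\
        f (prepend w z) = prepend v z').

Definition in_VA (f : cantor -> cantor) : Prop :=
  (exists g : cantor -> cantor, (forall x, g (f x) = x) /\ (forall x, f (g x) = x)) /\
  (exists l : list cantor, forall x, Sing f x -> In x l) /\
  (forall s, Sing f s -> sing_ok f s).

(** The orbit O = { f^i(s0) : i in Z } (g = f^{-1}). *)
Definition in_orbit (f g : cantor -> cantor) (s0 x : cantor) : Prop :=
  exists k : nat, x = Nat.iter k f s0 \/ x = Nat.iter k g s0.

Definition orbit_infinite (f g : cantor -> cantor) (s0 : cantor) : Prop :=
  ~ exists l : list cantor, forall x, in_orbit f g s0 x -> In x l.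

Definition orbit_card (f g : cantor -> cantor) (s0 : cantor) (m : nat) : Prop :=
  exists l : list cantor, NoDup l /\ length l = m /\
    forall x, In x l <-> in_orbit f g s0 x.

(* Being locally a prefix replacement (a single dyadic linear piece) is preserved by
   composition and by inversion.  Hence f^n is linear at every point of O whose first n
   forward images avoid s_0, which leaves only s_0, s_{-1}, ..., s_{-n+1}.  Conversely, if
   f^n were linear at s_{-j} (j < n), then f = f^{-(n-j-1)} o f^n o f^{-j} would be linear
   at s_0: as long as no s_k with 0 < k < n equals s_0, the outer factors only involve f
   at points of O other than s_0.  An infinite orbit has no such coincidence; a finite one
   of size m is s_0, s_{-1}, ..., s_{-m+1}, so none occurs for n <= m, and f^m fixes s_0. *)

From Stdlib Require Import Arith List Lia FunctionalExtensionality Classical.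
Import ListNotations.

Definition shift (z : cantor) (n : nat) : cantor := fun i => z (i + n).

Definition prefix_rule (f : cantor -> cantor) (x : cantor) (n : nat) (v : list bool) : Prop :=
  forall y, agree n x y -> f y = prepend v (shift y n).

Lemma prepend_lt w z i : i < length w -> prepend w z i = nth i w false.
Proof. intro H. unfold prepend. destruct (Nat.ltb_spec i (length w)); [reflexivity | lia]. Qed.

Lemma prepend_ge w z i : length w <= i -> prepend w z i = z (i - length w).
Proof. intro H. unfold prepend. destruct (Nat.ltb_spec i (length w)); [lia | reflexivity]. Qed.

Lemma prepend_nil z : prepend [] z = z.
Proof.
  apply functional_extensionality; intro i.
  rewrite prepend_ge by (simpl; lia). f_equal. simpl; lia.
Qed.

Lemma prepend_app u w z : prepend (u ++ w) z = prepend u (prepend w z).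
Proof.
  apply functional_extensionality; intro i.
  destruct (Nat.lt_ge_cases i (length u)).
  - rewrite !prepend_lt, app_nth1 by (rewrite ?length_app; lia). reflexivity.
  - rewrite (prepend_ge u) by lia.
    destruct (Nat.lt_ge_cases i (length u + length w)).
    + rewrite !prepend_lt, app_nth2 by (rewrite ?length_app; lia). reflexivity.
    + rewrite !prepend_ge, length_app by (rewrite ?length_app; lia). f_equal. lia.
Qed.

Lemma shift_prepend w z n : length w = n -> shift (prepend w z) n = z.
Proof.
  intros <-. apply functional_extensionality; intro i. unfold shift.
  rewrite prepend_ge by lia. f_equal. lia.
Qed.

Lemma shift_split y n : shift y n = prepend [y n] (shift y (S n)).
Proof.
  apply functional_extensionality; intros [|i]; unfold shift.
  - reflexivity.
  - rewrite prepend_ge by (simpl; lia). f_equal. simpl. lia.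
Qed.

Lemma agree_prepend w z y : agree (length w) (prepend w z) y -> in_cone w y.
Proof. intros H i Hi. rewrite H, prepend_lt by exact Hi. reflexivity. Qed.

Lemma in_cone_prepend_shift w y : in_cone w y -> y = prepend w (shift y (length w)).
Proof.
  intro H. apply functional_extensionality; intro i.
  destruct (Nat.lt_ge_cases i (length w)) as [Hi | Hi].
  - rewrite prepend_lt by exact Hi. apply H, Hi.
  - rewrite prepend_ge by exact Hi. unfold shift. f_equal. lia.
Qed.

Lemma length_map_seq {A} (h : nat -> A) n : length (map h (seq 0 n)) = n.
Proof. rewrite length_map, length_seq. reflexivity. Qed.

Lemma agree_prefix_prepend n x z : agree n x (prepend (map x (seq 0 n)) z).
Proof.
  intros i Hi. rewrite prepend_lt by (rewrite length_map_seq; lia).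
  rewrite nth_indep with (d' := x 0) by (rewrite length_map_seq; lia).
  rewrite map_nth, seq_nth by lia. reflexivity.
Qed.

Lemma prefix_rule_succ f x n v :
  prefix_rule f x n v -> prefix_rule f x (S n) (v ++ [x n]).
Proof.
  intros H y Hy. rewrite H by (intros i Hi; apply Hy; lia).
  rewrite shift_split, prepend_app, (Hy n) by lia. reflexivity.
Qed.

Lemma prefix_rule_deepen f x n v k : prefix_rule f x n v ->
  exists v', length v' = length v + k /\ prefix_rule f x (n + k) v'.
Proof.
  intro H. induction k as [|k [v' [Hlen Hv']]].
  - exists v. rewrite !Nat.add_0_r. auto.
  - exists (v' ++ [x (n + k)]). rewrite length_app, Hlen. simpl.
    replace (n + S k) with (S (n + k)) by lia.
    split; [lia | apply prefix_rule_succ, Hv'].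
Qed.

Lemma loc_linear_ext (f h : cantor -> cantor) x :
  (forall y, f y = h y) -> loc_linear f x -> loc_linear h x.
Proof. intros E [n [v H]]. exists n, v. intros y Hy. rewrite <- E. auto. Qed.

Lemma loc_linear_id x : loc_linear (fun y => y) x.
Proof.
  exists 0, []. intros y _. rewrite prepend_nil.
  apply functional_extensionality; intro i. f_equal. lia.
Qed.

Lemma loc_linear_comp (f h : cantor -> cantor) x :
  loc_linear f x -> loc_linear h (f x) -> loc_linear (fun y => h (f y)) x.
Proof.
  intros [n [v Hf]] [m [u Hh]]. change (prefix_rule h (f x) m u) in Hh.
  (* Refine f until its output word covers the depth m at which h is a prefix rule. *)
  destruct (prefix_rule_deepen f x n v m Hf) as [v' [Hlen Hv']].
  rewrite <- (firstn_skipn m v') in Hv'.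
  assert (Hm : length (firstn m v') = m) by (rewrite length_firstn; lia).
  exists (n + m), (u ++ skipn m v'). intros y Hy.
  change (h (f y) = prepend (u ++ skipn m v') (shift y (n + m))).
  assert (Hfy : f y = prepend (firstn m v') (prepend (skipn m v') (shift y (n + m)))).
  { rewrite Hv', prepend_app by exact Hy. reflexivity. }
  assert (Hagree : agree m (f x) (f y)).
  { intros i Hi. rewrite Hfy, (Hv' x (fun _ _ => eq_refl)), !prepend_app, !prepend_lt by lia.
    reflexivity. }
  rewrite (Hh _ Hagree), Hfy, shift_prepend, prepend_app by exact Hm. reflexivity.
Qed.

Lemma loc_linear_left_inverse (f g : cantor -> cantor) x :
  (forall y, g (f y) = y) -> loc_linear f x -> loc_linear g (f x).
Proof.
  intros gf [n [v Hf]]. change (prefix_rule f x n v) in Hf.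
  (* f maps the cone of depth n around x onto the whole cone [v]. *)
  exists (length v), (map x (seq 0 n)). intros z Hz.
  change (g z = prepend (map x (seq 0 n)) (shift z (length v))).
  set (y := prepend (map x (seq 0 n)) (shift z (length v))).
  assert (Hy : agree n x y) by apply agree_prefix_prepend.
  assert (Hcone : in_cone v z).
  { apply (agree_prepend v (shift x n)). rewrite <- (Hf x) by (intros i Hi; reflexivity). exact Hz. }
  rewrite (in_cone_prepend_shift v z Hcone) at 1.
  rewrite <- (gf y), (Hf y Hy). unfold y.
  rewrite shift_prepend by apply length_map_seq. reflexivity.
Qed.

Lemma loc_linear_iter (f : cantor -> cantor) n x :
  (forall i, i < n -> loc_linear f (Nat.iter i f x)) -> loc_linear (Nat.iter n f) x.
Proof.
  induction n as [|n IHn]; intro H.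
  - apply loc_linear_id.
  - apply (loc_linear_comp (Nat.iter n f) f); auto.
Qed.

Section InversePair.
Variables f g : cantor -> cantor.
Hypotheses (gf : forall x, g (f x) = x) (fg : forall x, f (g x) = x).

Lemma iter_inv_l a z : Nat.iter a g (Nat.iter a f z) = z.
Proof.
  induction a as [|a IHa]; [reflexivity|].
  rewrite (Nat.iter_succ_r a _ g). simpl. rewrite gf. exact IHa.
Qed.

Lemma iter_inv_r a z : Nat.iter a f (Nat.iter a g z) = z.
Proof.
  induction a as [|a IHa]; [reflexivity|].
  rewrite (Nat.iter_succ_r a _ f). simpl. rewrite fg. exact IHa.
Qed.

Lemma iter_f_g_le a b z : a <= b -> Nat.iter a f (Nat.iter b g z) = Nat.iter (b - a) g z.
Proof.
  intro H. replace (Nat.iter b g z) with (Nat.iter a g (Nat.iter (b - a) g z))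
    by (rewrite <- Nat.iter_add; f_equal; lia).
  apply iter_inv_r.
Qed.

Lemma iter_f_g_ge a b z : b <= a -> Nat.iter a f (Nat.iter b g z) = Nat.iter (a - b) f z.
Proof.
  intro H. replace (Nat.iter a f) with (fun y => Nat.iter (a - b) f (Nat.iter b f y))
    by (apply functional_extensionality; intro y; rewrite <- Nat.iter_add; f_equal; lia).
  rewrite iter_inv_r. reflexivity.
Qed.

Lemma loc_linear_iter_inv n x : loc_linear (Nat.iter n f) x -> loc_linear (Nat.iter n g) (Nat.iter n f x).
Proof. apply loc_linear_left_inverse, iter_inv_l. Qed.

Variable s0 : cantor.

Lemma in_orbit_f x : in_orbit f g s0 x -> in_orbit f g s0 (f x).
Proof.
  intros [k [-> | ->]].
  - exists (S k). left. reflexivity.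
  - destruct k as [|k].
    + exists 1. left. reflexivity.
    + exists k. right. apply fg.
Qed.

Lemma in_orbit_iter_f i x : in_orbit f g s0 x -> in_orbit f g s0 (Nat.iter i f x).
Proof. intro H. induction i; simpl; auto using in_orbit_f. Qed.

Lemma in_orbit_iter_g j : in_orbit f g s0 (Nat.iter j g s0).
Proof. exists j. right. reflexivity. Qed.

Lemma iter_g_dist i j : i < j -> Nat.iter i g s0 = Nat.iter j g s0 -> Nat.iter (j - i) g s0 = s0.
Proof. intros H E. rewrite <- (iter_f_g_le i j), <- E by lia. apply iter_inv_r. Qed.

Lemma NoDup_backward_orbit n : (forall k, 0 < k < n -> Nat.iter k g s0 <> s0) ->
  NoDup (map (fun j => Nat.iter j g s0) (seq 0 n)).
Proof.
  intro Hper. apply NoDup_map_NoDup_ForallPairs; [|apply seq_NoDup].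
  intros i j Hi Hj E. apply in_seq in Hi, Hj.
  destruct (Nat.lt_total i j) as [L | [L | L]]; auto; exfalso.
  - apply (Hper (j - i)); [lia | apply iter_g_dist; auto].
  - apply (Hper (i - j)); [lia | apply iter_g_dist; auto].
Qed.

Lemma iter_g_period_mul k : Nat.iter k g s0 = s0 -> forall q, Nat.iter (q * k) g s0 = s0.
Proof. intros Hk q. induction q; [reflexivity|]. simpl. rewrite Nat.iter_add, IHq. exact Hk. Qed.

Lemma in_orbit_period k : 0 < k -> Nat.iter k g s0 = s0 -> forall x, in_orbit f g s0 x ->
  In x (map (fun j => Nat.iter j g s0) (seq 0 k)).
Proof.
  intros Hk0 Hk.
  assert (Hback : forall a, In (Nat.iter a g s0) (map (fun j => Nat.iter j g s0) (seq 0 k))).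
  { intro a. apply in_map_iff. exists (a mod k). split.
    - transitivity (Nat.iter (a mod k + a / k * k) g s0).
      + rewrite Nat.iter_add, (iter_g_period_mul _ Hk). reflexivity.
      + f_equal. pose proof (Nat.div_mod_eq a k). lia.
    - apply in_seq. pose proof (Nat.mod_upper_bound a k). lia. }
  intros x [a [-> | ->]]; [|apply Hback].
  replace (Nat.iter a f s0) with (Nat.iter a f (Nat.iter (a * k) g s0))
    by (rewrite (iter_g_period_mul _ Hk); reflexivity).
  rewrite iter_f_g_le by nia. apply Hback.
Qed.

Lemma orbit_infinite_aperiodic : orbit_infinite f g s0 ->
  forall k, 0 < k -> Nat.iter k g s0 <> s0.
Proof.
  intros Hinf k Hk E. apply Hinf.
  exists (map (fun j => Nat.iter j g s0) (seq 0 k)). apply in_orbit_period; assumption.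
Qed.

Lemma orbit_card_pos m : orbit_card f g s0 m -> 1 <= m.
Proof.
  intros [l [_ [<- Hl]]].
  assert (Hs0 : In s0 l) by (apply Hl; exists 0; left; reflexivity).
  destruct l; [contradiction | simpl; lia].
Qed.

Lemma orbit_card_aperiodic m : orbit_card f g s0 m ->
  forall k, 0 < k < m -> Nat.iter k g s0 <> s0.
Proof.
  intros [l [Hnodup [<- Hl]]] k Hk E.
  assert (Hincl : incl l (map (fun j => Nat.iter j g s0) (seq 0 k))).
  { intros x Hx. apply in_orbit_period; [lia | exact E | apply Hl, Hx]. }
  apply NoDup_incl_length in Hincl; [|exact Hnodup].
  rewrite length_map, length_seq in Hincl. lia.
Qed.

(* Otherwise s_0, s_{-1}, ..., s_{-m} would be m + 1 distinct points of O. *)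
Lemma orbit_card_period m : orbit_card f g s0 m -> Nat.iter m g s0 = s0.
Proof.
  intro Hm. apply NNPP. intro Hper.
  assert (Hnodup : NoDup (map (fun j => Nat.iter j g s0) (seq 0 (S m)))).
  { apply NoDup_backward_orbit. intros k Hk.
    destruct (Nat.eq_dec k m) as [-> | Hne]; [exact Hper | apply (orbit_card_aperiodic m Hm); lia]. }
  destruct Hm as [l [_ [<- Hl]]].
  assert (Hincl : incl (map (fun j => Nat.iter j g s0) (seq 0 (S (length l)))) l).
  { intros x Hx. apply in_map_iff in Hx as [j [<- _]]. apply Hl, in_orbit_iter_g. }
  apply NoDup_incl_length in Hincl; [|exact Hnodup].
  rewrite length_map, length_seq in Hincl. lia.
Qed.

Hypothesis sing_unique : forall x, Sing f x -> in_orbit f g s0 x -> x = s0.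

Lemma loc_linear_iter_orbit n x : in_orbit f g s0 x ->
  (forall i, i < n -> Nat.iter i f x <> s0) -> loc_linear (Nat.iter n f) x.
Proof.
  intros Hx Hne. apply loc_linear_iter. intros i Hi.
  apply NNPP. intro Hsing. apply (Hne i Hi), sing_unique; [exact Hsing | apply in_orbit_iter_f, Hx].
Qed.

Lemma Sing_iter_orbit_backward n x : Sing (Nat.iter n f) x -> in_orbit f g s0 x ->
  exists j, j < n /\ x = Nat.iter j g s0.
Proof.
  intros Hsing Hx. apply NNPP. intro Hnot. apply Hsing, loc_linear_iter_orbit; [exact Hx|].
  intros i Hi E. apply Hnot. exists i. split; [exact Hi|].
  rewrite <- E. symmetry. apply iter_inv_l.
Qed.

Hypothesis Sing_s0 : Sing f s0.

Lemma Sing_iter_backward n j : j < n -> (forall k, 0 < k < n -> Nat.iter k g s0 <> s0) ->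
  Sing (Nat.iter n f) (Nat.iter j g s0).
Proof.
  intros Hj Hper Hlin. apply Sing_s0.
  destruct (n - j) as [|m] eqn:Hm; [lia|].
  assert (Hf_ne : forall k, 0 < k < n -> Nat.iter k f s0 <> s0).
  { intros k Hk E. apply (Hper k Hk).
    transitivity (Nat.iter k g (Nat.iter k f s0)); [rewrite E; reflexivity | apply iter_inv_l]. }
  assert (Hpre : loc_linear (Nat.iter j g) s0).
  { assert (Hfj : loc_linear (Nat.iter j f) (Nat.iter j g s0)).
    { apply loc_linear_iter_orbit; [apply in_orbit_iter_g|].
      intros i Hi. rewrite iter_f_g_le by lia. apply Hper. lia. }
    apply loc_linear_iter_inv in Hfj. rewrite iter_inv_r in Hfj. exact Hfj. }
  assert (Hpost : loc_linear (Nat.iter m g) (Nat.iter n f (Nat.iter j g s0))).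
  { rewrite iter_f_g_ge, Hm, Nat.iter_succ_r by lia.
    apply loc_linear_iter_inv, loc_linear_iter_orbit.
    - apply in_orbit_f. exists 0. left. reflexivity.
    - intros i Hi. rewrite <- Nat.iter_succ_r. apply Hf_ne. lia. }
  apply (loc_linear_ext (fun y => Nat.iter m g (Nat.iter n f (Nat.iter j g y)))).
  - intro y. rewrite iter_f_g_ge, Hm, Nat.iter_succ_r by lia. apply iter_inv_l.
  - apply (loc_linear_comp (fun y => Nat.iter n f (Nat.iter j g y))); [|exact Hpost].
    apply (loc_linear_comp (Nat.iter j g)); assumption.
Qed.

Lemma Sing_iter_orbit n : (forall k, 0 < k < n -> Nat.iter k g s0 <> s0) ->
  forall x, Sing (Nat.iter n f) x /\ in_orbit f g s0 x <-> exists j, j < n /\ x = Nat.iter j g s0.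
Proof.
  intros Hper x. split.
  - intros [Hsing Hx]. apply Sing_iter_orbit_backward; assumption.
  - intros [j [Hj ->]]. split; [apply Sing_iter_backward; assumption | apply in_orbit_iter_g].
Qed.

End InversePair.

Theorem mainTheorem7 (f g : cantor -> cantor) (s0 : cantor) :
  in_VA f ->
  (forall x, g (f x) = x) -> (forall x, f (g x) = x) ->
  Sing f s0 ->
  (forall x, Sing f x -> in_orbit f g s0 x -> x = s0) ->
  (orbit_infinite f g s0 ->
     (forall n, 1 <= n -> forall x,
        (Sing (Nat.iter n f) x /\ in_orbit f g s0 x) <->
        (exists j, j < n /\ x = Nat.iter j g s0)) /\
     (forall n, 1 <= n -> Nat.iter n f <> (fun x => x)) /\
     (forall n, 1 <= n -> exists l : list cantor,
        length l = n /\ NoDup l /\ forall x, In x l -> Sing (Nat.iter n f) x))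
  /\
  (forall m, orbit_card f g s0 m ->
     (forall n, 1 <= n <= m -> forall x,
        (Sing (Nat.iter n f) x /\ in_orbit f g s0 x) <->
        (exists j, j < n /\ x = Nat.iter j g s0)) /\
     Sing (Nat.iter m f) s0 /\ Nat.iter m f s0 = s0).
Proof.
  intros _ gf fg Hs0 Huniq. split.
  - intro Hinf.
    assert (Hper : forall n k, 0 < k < n -> Nat.iter k g s0 <> s0)
      by (intros n k Hk; apply (orbit_infinite_aperiodic f g fg s0 Hinf); lia).
    split; [|split].
    + intros n _. exact (Sing_iter_orbit f g gf fg s0 Huniq Hs0 n (Hper n)).
    + intros n Hn Hid. apply (Sing_iter_backward f g gf fg s0 Huniq Hs0 n 0 Hn (Hper n)).
      rewrite Hid. apply loc_linear_id.
    + intros n Hn. exists (map (fun j => Nat.iter j g s0) (seq 0 n)). split; [|split].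
      * apply length_map_seq.
      * exact (NoDup_backward_orbit f g fg s0 n (Hper n)).
      * intros x Hx. apply in_map_iff in Hx as [j [<- Hj]]. apply in_seq in Hj.
        apply (Sing_iter_backward f g gf fg s0 Huniq Hs0 n j); [lia | exact (Hper n)].
  - intros m Hm.
    pose proof (orbit_card_aperiodic f g fg s0 m Hm) as Hper.
    split; [|split].
    + intros n Hn. apply (Sing_iter_orbit f g gf fg s0 Huniq Hs0 n).
      intros k Hk. apply Hper. lia.
    + apply (Sing_iter_backward f g gf fg s0 Huniq Hs0 m 0); [|exact Hper].
      apply (orbit_card_pos f g s0 m Hm).
    + rewrite <- (orbit_card_period f g fg s0 m Hm) at 1. apply iter_inv_r, fg.
Qed.
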